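(* Let $G\le\mathrm{O}(d)$ be finite and $x\in\mathbb{R}^d$. The following are equivalent: (a) $x\in P(G)$; (b) $G$ acts freely and transitively on the collection $\{V_p\}_{p\in[x]}$ via $g\cdot V_p:=V_{gp}$ (i.e. the sets $V_{gx}$, $g\in G$, are pairwise distinct); (c) for every $y\in\mathbb{R}^d$, $y\in V_x$ implies $x\in V_y$.
   Context: For $x\in\mathbb{R}^d$, $[x]:=\{gx:g\in G\}$. The open Voronoi cell $V_x$ is the set of $y\in\mathbb{R}^d$ such that $x$ is the unique maximizer of $\langle p,y\rangle$ over $p\in[x]$. The set of principal points is $P(G):=\{x\in\mathbb{R}^d:\mathrm{stab}_G(x)=\{\mathrm{id}\}\}$. *)

From mathcomp Require Import all_boot all_order all_algebra.
From mathcomp Require Import reals.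
Set Implicit Arguments. Unset Strict Implicit. Unset Printing Implicit Defensive.
Import Order.TTheory GRing.Theory Num.Theory.
Local Open Scope ring_scope.

Section Defs.
Variables (R : realType) (d : nat).

Definition dotp (p y : 'rV[R]_d) : R := (p *m y^T) 0 0.

Definition orthogonal (g : 'M[R]_d) : Prop := g *m g^T = 1%:M.

Definition finite_subgroup_O (G : seq 'M[R]_d) : Prop :=
  [/\ 1%:M \in G,
      (forall g h, g \in G -> h \in G -> g *m h \in G),
      (forall g, g \in G -> invmx g \in G) &
      (forall g, g \in G -> orthogonal g)].

(* action of a matrix g on a point x (column convention g x, written for rows) *)
Definition act (g : 'M[R]_d) (x : 'rV[R]_d) : 'rV[R]_d := x *m g^T.

Definition orbit (G : seq 'M[R]_d) (x : 'rV[R]_d) : seq 'rV[R]_d :=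
  [seq act g x | g <- G].

Definition voronoi (G : seq 'M[R]_d) (x y : 'rV[R]_d) : Prop :=
  forall p, p \in orbit G x -> p != x -> dotp p y < dotp x y.

Definition principal (G : seq 'M[R]_d) (x : 'rV[R]_d) : Prop :=
  forall g, g \in G -> act g x = x -> g = 1%:M.

End Defs.

(* Since G is orthogonal, <gy, x> = <y, g^T x>.  Hence y in V_x forces x in V_y
   once no g <> 1 fixes x.  Conversely, if gx = x with g <> 1, perturb x to
   y = x + e v with gv <> v and e so small that y stays in the open cell V_x;
   then gy <> y but <gy, x> = <y, x>, so x is not in V_y.  Finally, every point
   of an orbit lies in its own cell and distinct points of one orbit have
   disjoint cells, so the cells V_(gx) are pairwise distinct exactly when
   g |-> gx is injective on G, i.e. when x is principal. *)
From Pilot Require Import Defs.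
From mathcomp Require Import all_boot all_order all_algebra.
From mathcomp Require Import reals.
From mathcomp Require Import lra.
Import Order.TTheory GRing.Theory Num.Theory.
Set Implicit Arguments. Unset Strict Implicit.
Local Open Scope ring_scope.

Lemma exists_small_scale (R : realFieldType) (T : eqType) (s : seq T)
    (a b : T -> R) :
  {in s, forall p, 0 < a p} ->
  exists2 e : R, 0 < e & {in s, forall p, e * `|b p| < a p}.
Proof.
elim: s => [|q s IH] a_gt0; first by exists 1.
have [e e_gt0 He] : exists2 e : R, 0 < e & {in s, forall p, e * `|b p| < a p}.
  by apply: IH => p ps; apply: a_gt0; rewrite inE ps orbT.
have aq_gt0 : 0 < a q by apply: a_gt0; rewrite inE eqxx.
have bq1_gt0 : 0 < `|b q| + 1 by rewrite ltr_wpDl.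
pose e_q := a q / (`|b q| + 1).
have e_q_gt0 : 0 < e_q by rewrite divr_gt0.
have e_qE : e_q * (`|b q| + 1) = a q by rewrite mulfVK ?gt_eqF.
exists (Num.min e e_q); first by rewrite lt_min e_gt0 e_q_gt0.
move=> p; rewrite inE => /orP[/eqP -> | ps].
  have : Num.min e e_q * `|b q| <= e_q * `|b q| by rewrite ler_wpM2r ?ge_min ?lexx ?orbT.
  lra.
have : Num.min e e_q * `|b p| <= e * `|b p| by rewrite ler_wpM2r ?ge_min ?lexx.
have := He p ps; lra.
Qed.

Section InnerProduct.
Variables (R : realType) (d : nat).
Implicit Types (a b c v z : 'rV[R]_d) (g h : 'M[R]_d).

Lemma dotpE a b : dotp a b = \sum_i a 0 i * b 0 i.
Proof. by rewrite /dotp !mxE; apply: eq_bigr => i _; rewrite mxE. Qed.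

Lemma dotpC a b : dotp a b = dotp b a.
Proof. by rewrite !dotpE; apply: eq_bigr => i _; rewrite mulrC. Qed.

Lemma dotpDl a b c : dotp (a + b) c = dotp a c + dotp b c.
Proof. by rewrite !dotpE -big_split; apply: eq_bigr => i _; rewrite mxE mulrDl. Qed.

Lemma dotpZl (e : R) a c : dotp (e *: a) c = e * dotp a c.
Proof. by rewrite !dotpE mulr_sumr; apply: eq_bigr => i _; rewrite mxE mulrA. Qed.

Lemma dotpBl a b c : dotp (a - b) c = dotp a c - dotp b c.
Proof. by rewrite -scaleN1r dotpDl dotpZl mulN1r. Qed.

Lemma dotpDr a b c : dotp c (a + b) = dotp c a + dotp c b.
Proof. by rewrite dotpC dotpDl !(dotpC c). Qed.

Lemma dotpBr a b c : dotp c (a - b) = dotp c a - dotp c b.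
Proof. by rewrite dotpC dotpBl !(dotpC c). Qed.

Lemma dotpZr (e : R) a c : dotp c (e *: a) = e * dotp c a.
Proof. by rewrite dotpC dotpZl dotpC. Qed.

Lemma dotp_gt0 a : a != 0 -> 0 < dotp a a.
Proof.
move=> a_neq0; have sq_ge0 k : 0 <= a 0 k * a 0 k by rewrite -expr2 sqr_ge0.
rewrite lt_def dotpE sumr_ge0 // andbT; apply: contra a_neq0 => /eqP a2_eq0.
apply/eqP/matrixP => i j; rewrite mxE (ord1 i).
have /eqP := psumr_eq0P (fun k _ => sq_ge0 k) a2_eq0 (i := j) isT.
by rewrite mulf_eq0 orbb => /eqP.
Qed.

Lemma act_act g h z : act g (act h z) = act (g *m h) z.
Proof. by rewrite /act trmx_mul mulmxA. Qed.

Lemma act1 z : act 1%:M z = z.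
Proof. by rewrite /act trmx1 mulmx1. Qed.

Lemma actD g a b : act g (a + b) = act g a + act g b.
Proof. exact: mulmxDl. Qed.

Lemma actZ g (e : R) a : act g (e *: a) = e *: act g a.
Proof. by rewrite /act scalemxAl. Qed.

Lemma dotp_act g a b : dotp (act g a) b = dotp a (act g^T b).
Proof. by rewrite /dotp /act trmxK trmx_mul mulmxA. Qed.

Lemma act_neq g : g != 1%:M -> exists v, act g v != v.
Proof.
move=> g_neq1.
have [/existsP[i moved] | /existsPn fixed] :=
  boolP [exists i, act g (delta_mx 0 i) != delta_mx 0 i].
  by exists (delta_mx 0 i).
case/eqP: g_neq1; rewrite -[g]trmxK -[1%:M]trmx1; congr trmx.
apply/row_matrixP => i; rewrite !rowE mulmx1.
by have := fixed i; rewrite negbK => /eqP.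
Qed.

Section Orthogonal.
Variables (g : 'M[R]_d) (g_orth : Defs.orthogonal g).

Lemma trmx_orth_mul : g^T *m g = 1%:M.
Proof. exact: mulmx1C. Qed.

Lemma orth_invmx : invmx g = g^T.
Proof.
have [g_unit _] := mulmx1_unit g_orth.
by rewrite -[invmx g]mulmx1 -g_orth mulmxA mulVmx // mul1mx.
Qed.

Lemma actK z : act g^T (act g z) = z.
Proof. by rewrite act_act trmx_orth_mul act1. Qed.

Lemma dotp_act_lt z : act g z != z -> dotp (act g z) z < dotp z z.
Proof.
rewrite -subr_eq0 => /dotp_gt0.
rewrite dotpBl !dotpBr dotp_act actK (dotpC z (act g z)); lra.
Qed.

End Orthogonal.
End InnerProduct.

Section VoronoiCells.
Variables (R : realType) (d : nat) (G : seq 'M[R]_d).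
Hypothesis G_sub : finite_subgroup_O G.
Implicit Types (p v y z : 'rV[R]_d) (g h : 'M[R]_d).

Let G1 : 1%:M \in G. Proof. by case: G_sub. Qed.
Let GM g h : g \in G -> h \in G -> g *m h \in G. Proof. by case: G_sub => _ GM _ _; apply: GM. Qed.
Let G_orth g : g \in G -> Defs.orthogonal g. Proof. by case: G_sub => _ _ _ G_orth; apply: G_orth. Qed.

Lemma trmx_in g : g \in G -> g^T \in G.
Proof. by case: G_sub => _ _ GV _ gG; rewrite -(orth_invmx (G_orth gG)) GV. Qed.

Lemma act_in_orbit g z : g \in G -> act g z \in Defs.orbit G z.
Proof. exact: map_f. Qed.

Lemma orbit_sym p z : p \in Defs.orbit G z -> z \in Defs.orbit G p.
Proof.
case/mapP => g gG ->; rewrite -{1}(actK (G_orth gG) z).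
by apply: act_in_orbit; apply: trmx_in.
Qed.

Lemma voronoi_self z : voronoi G z z.
Proof. by move=> _ /mapP[g gG ->]; apply: dotp_act_lt; apply: G_orth. Qed.

Lemma voronoi_uniq p z y :
  p \in Defs.orbit G z -> voronoi G p y -> voronoi G z y -> p = z.
Proof.
move=> pz Vp Vz; apply/eqP; apply: contraT => p_neq_z.
have := Vz _ pz p_neq_z; have := Vp _ (orbit_sym pz); rewrite eq_sym => /(_ p_neq_z).
by move=> /lt_trans H /H; rewrite ltxx.
Qed.

Lemma voronoi_eq_orbit g h z : g \in G -> h \in G ->
  (forall y, voronoi G (act g z) y <-> voronoi G (act h z) y) -> act g z = act h z.
Proof.
move=> gG hG sameV; have gz_in : act g z \in Defs.orbit G (act h z).
  by rewrite -{1}(actK (G_orth hG) z) act_act act_in_orbit ?GM ?trmx_in.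
apply: (voronoi_uniq gz_in (@voronoi_self (act g z))).
by apply/sameV; apply: voronoi_self.
Qed.

Lemma voronoi_perturb x v : exists2 e, 0 < e & voronoi G x (x + e *: v).
Proof.
have [|e e_gt0 small] := @exists_small_scale _ _ [seq p <- Defs.orbit G x | p != x]
    (fun p => dotp x x - dotp p x) (fun p => dotp p v - dotp x v).
  by move=> p; rewrite mem_filter subr_gt0 => /andP[px pG]; apply: voronoi_self.
exists e => // p pG px; rewrite !dotpDr !dotpZr.
have := small p; rewrite mem_filter px pG => /(_ isT).
have : e * (dotp p v - dotp x v) <= e * `|dotp p v - dotp x v|.
  by apply: ler_wpM2l; [exact: ltW | exact: ler_norm].
lra.
Qed.

Section PrincipalPoint.
Variable x : 'rV[R]_d.

Lemma principal_act_inj : principal G x ->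
  forall g h, g \in G -> h \in G -> act g x = act h x -> g = h.
Proof.
move=> x_pr g h gG hG gx_hx.
have : act (h^T *m g) x = x by rewrite -act_act gx_hx (actK (G_orth hG)).
move/(x_pr _ (GM (trmx_in hG) gG)) => hTg1.
by rewrite -[g]mul1mx -(G_orth hG) -mulmxA hTg1 mulmx1.
Qed.

Lemma principal_iff_voronoi_inj :
  principal G x <->
  (forall g h, g \in G -> h \in G ->
     (forall y, voronoi G (act g x) y <-> voronoi G (act h x) y) -> g = h).
Proof.
split=> [x_pr g h gG hG sameV | V_inj g gG gx].
  exact/(principal_act_inj x_pr gG hG)/voronoi_eq_orbit.
by apply: V_inj gG G1 _ => y; rewrite gx act1.
Qed.

Lemma voronoi_swap : principal G x -> forall y, voronoi G x y -> voronoi G y x.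
Proof.
move=> x_pr y Vy _ /mapP[g gG ->] gy_neq_y.
have gTx_neq_x : act g^T x != x.
  apply: contra gy_neq_y => /eqP gTx.
  have -> : g = 1%:M by rewrite -[g]trmxK (x_pr _ (trmx_in gG) gTx) trmx1.
  by rewrite act1.
rewrite dotp_act (dotpC y) (dotpC y).
exact: Vy _ (act_in_orbit _ (trmx_in gG)) gTx_neq_x.
Qed.

Lemma principal_of_voronoi_swap :
  (forall y, voronoi G x y -> voronoi G y x) -> principal G x.
Proof.
move=> swap g gG gx; apply/eqP; apply: contraT => /act_neq[v gv_neq_v].
have [e e_gt0 Vy] := voronoi_perturb x v.
have gy_neq_y : act g (x + e *: v) != x + e *: v.
  rewrite actD actZ gx; apply: contra gv_neq_v => /eqP /addrI /scalerI -> //.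
  by rewrite gt_eqF.
have := swap _ Vy _ (act_in_orbit _ gG) gy_neq_y.
by rewrite dotp_act -{2}gx (actK (G_orth gG)) ltxx.
Qed.

End PrincipalPoint.
End VoronoiCells.

Theorem lemma23 (R : realType) (d : nat) (G : seq 'M[R]_d) (x : 'rV[R]_d) :
  finite_subgroup_O G ->
  [/\ (principal G x <->
       (forall g h, g \in G -> h \in G ->
          (forall y, voronoi G (act g x) y <-> voronoi G (act h x) y) -> g = h)),
      (principal G x <->
       (forall y : 'rV[R]_d, voronoi G x y -> voronoi G y x)) &
      ((forall g h, g \in G -> h \in G ->
          (forall y, voronoi G (act g x) y <-> voronoi G (act h x) y) -> g = h) <->
       (forall y : 'rV[R]_d, voronoi G x y -> voronoi G y x))].
Proof.
move=> G_sub.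
have ab := principal_iff_voronoi_inj G_sub x.
have ac : principal G x <-> (forall y, voronoi G x y -> voronoi G y x).
  by split; [apply: voronoi_swap | apply: principal_of_voronoi_swap].
by split=> //; apply: iff_trans (iff_sym ab) ac.
Qed.
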